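(* Suppose $0<c<1$ and let $b=\tfrac12-c$. For any $x\in\mathbb T$ there exist an integer $n\ge1$ and a point $y\in T^{-n}x$ such that $b\notin O_n^+(y)\cup O^-(y)$.
   Context: $\mathbb T=\mathbb R/\mathbb Z$, $Tx=2x\bmod1$. For $y\in\mathbb T$ and $n\ge1$, $O_n^+(y)=\{y,Ty,\dots,T^{n-1}y\}$ is the finite forward orbit and $O^-(y)=\bigcup_{k\ge1}T^{-k}y$ is the backward orbit. *)

(* the circle T = R/Z is represented by canonical
   representatives in [0,1); reduction mod 1 is Stdlib's frac_part. *)
From Stdlib Require Import Reals.
Open Scope R_scope.

Definition inT (x : R) : Prop := 0 <= x < 1.

Definition toT (x : R) : R := frac_part x.

Definition dbl (x : R) : R := toT (2 * x).

Definition dbl_iter (k : nat) (x : R) : R := Nat.iter k dbl x.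

Definition fwd_orbit (n : nat) (y : R) (z : R) : Prop :=
  exists k : nat, (k < n)%nat /\ dbl_iter k y = z.

Definition bwd_orbit (y : R) (z : R) : Prop :=
  inT z /\ exists k : nat, (1 <= k)%nat /\ dbl_iter k z = y.

From Stdlib Require Import Reals Lra Lia Classical Arith.
Open Scope R_scope.

(* Since [b <> 1/2], one of the inverse branches [t |-> t/2], [t |-> (t+1)/2]
   of the doubling map takes values in a half of the circle avoiding [b].
   Iterating it from [x] gives an injective backward orbit [y 0, y 1, ...] of
   [x] that never meets [b]; for [n = N+1] the finite forward orbit of [y N]
   is [{y N, ..., y 0}], so it avoids [b].  It remains to choose [N] with
   [y N] outside the forward orbit of [b].  If every [y n] were some [T^k b],
   take [k] minimal with [T^k b = y n]: as [y n] is also the image of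
   [y (n+1)], itself of the form [T^k' b] with [k' >= k], it is periodic, say
   of period [p]; but then [y (n+p)], again in the orbit of [T^k b = y n], is
   fixed by [T^p] while [T^p (y (n+p)) = y n], contradicting injectivity. *)

Section InjectiveBackwardOrbit.

Variables (A : Type) (f : A -> A) (y : nat -> A).
Hypothesis y_back : forall n, f (y (S n)) = y n.
Hypothesis y_inj : forall m n, y m = y n -> m = n.

Lemma iter_back j m : Nat.iter j f (y (j + m)) = y m.
Proof.
  induction j as [|j IH]; [reflexivity|].
  cbn [Nat.add]. now rewrite Nat.iter_succ_r, y_back.
Qed.

Lemma iter_split_le (a : A) k k' :
  (k <= k')%nat -> Nat.iter k' f a = Nat.iter (k' - k) f (Nat.iter k f a).
Proof. intros Hk. now rewrite <- Nat.iter_add, Nat.sub_add. Qed.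

Lemma periodic_iter_neq_back m p j :
  (0 < p)%nat -> Nat.iter p f (y m) = y m -> Nat.iter j f (y m) <> y (p + m).
Proof.
  intros Hp Hper Hj.
  assert (Hfix : y (p + m) = y m).
  { rewrite <- Hj at 1. rewrite <- Hper at 1.
    rewrite <- Nat.iter_add, Nat.add_comm, Nat.iter_add, Hj.
    apply iter_back. }
  apply y_inj in Hfix. lia.
Qed.

Lemma exists_back_not_iter (b : A) : exists n, forall k, Nat.iter k f b <> y n.
Proof.
  apply NNPP; intros Hnone.
  assert (Hall : forall n, exists k, Nat.iter k f b = y n).
  { intros n. apply NNPP; intros Hn. apply Hnone.
    exists n; intros k Hk. apply Hn. now exists k. }
  assert (Hfree : forall k n, Nat.iter k f b <> y n).
  { intros k; induction k as [k IH] using lt_wf_ind; intros n Hk.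
    assert (Hmin : forall k' n', Nat.iter k' f b = y n' -> (k <= k')%nat).
    { intros k' n' Hk'. destruct (Nat.lt_ge_cases k' k) as [Hlt|Hge]; [|exact Hge].
      exfalso. exact (IH k' Hlt n' Hk'). }
    destruct (Hall (S n)) as [k1 Hk1].
    pose proof (Hmin _ _ Hk1) as Hk1_ge.
    set (p := (S k1 - k)%nat).
    assert (Hper : Nat.iter p f (y n) = y n).
    { rewrite <- Hk at 1. rewrite <- Nat.iter_add.
      replace (p + k)%nat with (S k1) by lia.
      now rewrite Nat.iter_succ, Hk1, y_back. }
    destruct (Hall (p + n)%nat) as [k2 Hk2].
    apply (periodic_iter_neq_back n p (k2 - k)); [lia|exact Hper|].
    rewrite <- Hk, <- (iter_split_le b k k2 (Hmin _ _ Hk2)). exact Hk2. }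
  destruct (Hall 0%nat) as [k Hk]. exact (Hfree k 0%nat Hk).
Qed.

End InjectiveBackwardOrbit.

Lemma frac_part_IZR_add (k : Z) (z : R) : 0 <= z < 1 -> frac_part (IZR k + z) = z.
Proof. intros Hz. symmetry. exact (proj2 (Int_part_frac_part_spec _ k z Hz eq_refl)). Qed.

Lemma frac_part_id (z : R) : 0 <= z < 1 -> frac_part z = z.
Proof. intros Hz. rewrite <- (frac_part_IZR_add 0 z Hz) at 2. f_equal. simpl; ring. Qed.

Lemma toT_half_sub_neq_half (c : R) : 0 < c < 1 -> toT (1/2 - c) <> 1/2.
Proof.
  intros Hc Hhalf. unfold toT in Hhalf.
  pose proof (Rplus_Int_part_frac_part (1/2 - c)) as Hdecomp.
  rewrite Hhalf in Hdecomp.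
  set (m := Int_part (1/2 - c)) in Hdecomp.
  assert (Hlo : (-1 < m)%Z) by (apply lt_IZR; lra).
  assert (Hhi : (m < 0)%Z) by (apply lt_IZR; lra).
  lia.
Qed.

Record avoiding_back_orbit (x b : R) (y : nat -> R) : Prop := {
  back_inT : forall n, inT (y n);
  back_dbl : forall n, dbl (y (S n)) = y n;
  back_start : dbl (y 0%nat) = x;
  back_inj : forall m n, y m = y n -> m = n;
  back_avoid : forall n, y n <> b
}.

Definition halvings (a : R) (n : nat) : R := a / 2 ^ S n.

Lemma halvings_bounds a n : 0 < a <= 1 -> 0 < halvings a n <= 1/2.
Proof.
  intros Ha. unfold halvings. simpl.
  pose proof (pow_R1_Rle 2 n ltac:(lra)) as Hpow.
  split.
  - apply Rdiv_lt_0_compat; lra.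
  - apply Rmult_le_reg_r with (2 * 2 ^ n); [lra|].
    unfold Rdiv. rewrite Rmult_assoc, Rinv_l by lra. nra.
Qed.

Lemma halvings_S a n : 2 * halvings a (S n) = halvings a n.
Proof. unfold halvings. simpl. field. apply pow_nonzero. lra. Qed.

Lemma halvings_0 a : 2 * halvings a 0 = a.
Proof. unfold halvings. simpl. field. Qed.

Lemma halvings_inj a m n : 0 < a -> halvings a m = halvings a n -> m = n.
Proof.
  intros Ha Heq. unfold halvings in Heq.
  assert (Hpow : 2 ^ S m = 2 ^ S n).
  { apply Rinv_eq_reg, (Rmult_eq_reg_l a); [exact Heq|lra]. }
  destruct (lt_eq_lt_dec m n) as [[Hlt|Heqmn]|Hlt]; [|exact Heqmn|];
    pose proof (Rlt_pow 2 _ _ ltac:(lra) (le_n_S _ _ Hlt)); lra.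
Qed.

Lemma avoiding_back_orbit_low (x b : R) :
  inT x -> ~ (0 < b <= 1/2) -> exists y, avoiding_back_orbit x b y.
Proof.
  intros Hx Hb.
  (* [x / 2^n] is constant when [x = 0]; start from the representative [1]. *)
  set (a := if Req_EM_T x 0 then 1 else x).
  assert (Ha : 0 < a <= 1 /\ toT a = x).
  { unfold a, inT, toT in *. destruct (Req_EM_T x 0) as [->|Hx0].
    - split; [lra|]. rewrite <- (frac_part_IZR_add 1 0) by lra. f_equal. simpl; ring.
    - split; [lra|]. apply frac_part_id; lra. }
  exists (halvings a). destruct Ha as [Ha Hax].
  pose proof (fun n => halvings_bounds a n Ha) as Hbd.
  constructor.
  - intros n. unfold inT. specialize (Hbd n). lra.
  - intros n. unfold dbl, toT. rewrite halvings_S. apply frac_part_id.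
    specialize (Hbd n). lra.
  - unfold dbl. now rewrite halvings_0.
  - intros m n. apply halvings_inj. lra.
  - intros n Hn. apply Hb. rewrite <- Hn. apply Hbd.
Qed.

Lemma avoiding_back_orbit_high (x b : R) :
  inT x -> ~ (1/2 <= b < 1) -> exists y, avoiding_back_orbit x b y.
Proof.
  intros Hx Hb. unfold inT in Hx.
  pose proof (fun n => halvings_bounds (1 - x) n ltac:(lra)) as Hbd.
  exists (fun n => 1 - halvings (1 - x) n).
  constructor.
  - intros n. unfold inT. specialize (Hbd n). lra.
  - intros n. unfold dbl, toT.
    replace (2 * (1 - halvings (1 - x) (S n))) with (IZR 1 + (1 - halvings (1 - x) n))
      by (pose proof (halvings_S (1 - x) n); simpl; lra).
    apply frac_part_IZR_add. specialize (Hbd n). lra.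
  - unfold dbl, toT.
    replace (2 * (1 - halvings (1 - x) 0)) with (IZR 1 + x)
      by (pose proof (halvings_0 (1 - x)); simpl; lra).
    now apply frac_part_IZR_add.
  - intros m n Heq. apply (halvings_inj (1 - x)); lra.
  - intros n Hn. apply Hb. rewrite <- Hn. specialize (Hbd n). lra.
Qed.

Lemma exists_avoiding_back_orbit (x b : R) :
  inT x -> b <> 1/2 -> exists y, avoiding_back_orbit x b y.
Proof.
  intros Hx Hb. destruct (Rlt_le_dec b (1/2)).
  - apply avoiding_back_orbit_high; [exact Hx|]. intros [Hle _]. lra.
  - apply avoiding_back_orbit_low; [exact Hx|]. intros [_ Hle]. apply Hb. lra.
Qed.

Theorem lemma6p3 (c : R) (hc : 0 < c < 1) (x : R) (hx : inT x) :
  exists n : nat, (1 <= n)%nat /\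
    exists y : R, inT y /\ dbl_iter n y = x /\
      ~ fwd_orbit n y (toT (1/2 - c)) /\ ~ bwd_orbit y (toT (1/2 - c)).
Proof.
  set (b := toT (1/2 - c)).
  destruct (exists_avoiding_back_orbit x b hx (toT_half_sub_neq_half c hc))
    as [y [Hin Hdbl Hstart Hinj Havoid]].
  destruct (exists_back_not_iter R dbl y Hdbl Hinj b) as [N HN].
  exists (S N). split; [lia|].
  exists (y N). split; [|split; [|split]].
  - apply Hin.
  - unfold dbl_iter. rewrite Nat.iter_succ, <- Hstart.
    f_equal. rewrite <- (iter_back R dbl y Hdbl N 0). now rewrite Nat.add_0_r.
  - intros [k [Hk Hkb]]. apply (Havoid (N - k)%nat).
    rewrite <- Hkb. unfold dbl_iter.
    rewrite <- (iter_back R dbl y Hdbl k (N - k)). f_equal. f_equal. lia.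
  - intros [_ [k [_ Hk]]]. exact (HN k Hk).
Qed.
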